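(* Let $f,g$ be invertible $\mathbb F_q$-linearised polynomials over $\mathbb F_{q^h}$ and $m\ge1$. If $(f,g)$ satisfies property $(Prop_m)$, then so do $(f^{-1},f^{-1}\circ g)$ and $(g^{-1},g^{-1}\circ f)$.
   Context: An $\mathbb F_q$-linearised polynomial over $\mathbb F_{q^h}$ is $\sum_{l=0}^{h-1}a_lX^{q^l}$ with $a_l\in\mathbb F_{q^h}$, viewed as a map of $\mathbb F_{q^h}$; invertible means bijective. Identities $\equiv$ mean equality as maps. Property $(Prop_m)$: $(f,g)$ satisfies it if there exist triples $(a_j,b_j,c_j)\in(\mathbb F_{q^h}^* )^3$, $1\le j\le m$, with $(a_1,b_1,c_1)=(1,1,1)$, such that $a_jf(b_jf^{-1}(X))\equiv g(c_jg^{-1}(X))$ for every $j$, and for all $i\ne j$: $a_i\ne a_j$, $b_i\ne b_j$, $c_i\ne c_j$. *)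

From mathcomp Require Import all_boot all_order all_algebra all_field.
Set Implicit Arguments. Unset Strict Implicit. Unset Printing Implicit Defensive.
Import GRing.Theory.
Local Open Scope ring_scope.

(* L plays the role of F_{q^h}: a finite field with #|L| = q^h (q > 1, h > 0).
   Its subfield of order q is F_q. *)

Definition linearised (L : finFieldType) (q h : nat) (f : L -> L) : Prop :=
  exists a : 'I_h -> L, forall x : L, f x = \sum_(l < h) a l * x ^+ (q ^ l).

(* Property (Prop_m) for the pair (f,g), where finv, ginv are the
   inverse maps of f, g.  Triples indexed by 'I_m (index 0 is the
   distinguished triple (1,1,1)). *)
Definition Prop_m (L : finFieldType) (m : nat)
    (f finv g ginv : L -> L) : Prop :=
  exists a b c : 'I_m -> L,
    (forall j, [/\ a j != 0, b j != 0 & c j != 0]) /\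
    (forall j : 'I_m, val j = 0%N -> [/\ a j = 1, b j = 1 & c j = 1]) /\
    (forall j x, a j * f (b j * finv x) = g (c j * ginv x)) /\
    [/\ injective a, injective b & injective c].

From mathcomp Require Import all_boot all_order all_algebra all_field.
Set Implicit Arguments. Unset Strict Implicit. Unset Printing Implicit Defensive.
Import GRing.Theory.
Local Open Scope ring_scope.

(* So the triples (b^-1, a^-1, c^-1)
   and (c^-1, a, b^-1) witness the two conclusions, and inverting the entries
   keeps them nonzero, distinct and equal to (1,1,1) at index 0. *)

Section ScaledEquiv.

Variable L : fieldType.

Definition scaled_equiv (a b c : L) (f finv g ginv : L -> L) : Prop :=
  forall x, a * f (b * finv x) = g (c * ginv x).

Variables f finv g ginv : L -> L.
Hypotheses (fK : cancel f finv) (finvK : cancel finv f).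
Hypotheses (gK : cancel g ginv) (ginvK : cancel ginv g).

Lemma scaled_equiv_finv (a b c : L) :
  [/\ a != 0, b != 0 & c != 0] -> scaled_equiv a b c f finv g ginv ->
  scaled_equiv b^-1 a^-1 c^-1 finv f (finv \o g) (ginv \o f).
Proof.
move=> [a0 b0 c0] Habc y /=.
have Hy := Habc (g (c^-1 * ginv (f y))).
rewrite gK mulVKf // ginvK in Hy.
by rewrite -{1}Hy mulKf // fK mulKf.
Qed.

Lemma scaled_equiv_ginv (a b c : L) :
  b != 0 -> c != 0 -> scaled_equiv a b c f finv g ginv ->
  scaled_equiv c^-1 a b^-1 ginv g (ginv \o f) (finv \o g).
Proof.
move=> b0 c0 Habc y /=.
have Hy := Habc (f (b^-1 * finv (g y))).
rewrite fK mulVKf // finvK in Hy.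
by rewrite Hy gK mulKf.
Qed.

End ScaledEquiv.

Section PropmInverse.

Variables (L : finFieldType) (m : nat) (f finv g ginv : L -> L).
Hypotheses (fK : cancel f finv) (finvK : cancel finv f).
Hypotheses (gK : cancel g ginv) (ginvK : cancel ginv g).

Lemma Prop_m_finv :
  Prop_m m f finv g ginv -> Prop_m m finv f (finv \o g) (ginv \o f).
Proof.
move=> [a [b [c [nz [one [equiv [ia ib ic]]]]]]].
exists (GRing.inv \o b), (GRing.inv \o a), (GRing.inv \o c).
split; last split; last split.
- by move=> j /=; case: (nz j) => *; rewrite !invr_eq0.
- by move=> j /one [/= -> -> ->]; rewrite invr1.
- by move=> j; apply: (scaled_equiv_finv fK gK ginvK (nz j) (equiv j)).
- by split; apply: inj_comp invr_inj _.
Qed.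

Lemma Prop_m_ginv :
  Prop_m m f finv g ginv -> Prop_m m ginv g (ginv \o f) (finv \o g).
Proof.
move=> [a [b [c [nz [one [equiv [ia ib ic]]]]]]].
exists (GRing.inv \o c), a, (GRing.inv \o b).
split; last split; last split.
- by move=> j /=; case: (nz j) => *; rewrite !invr_eq0.
- by move=> j /one [/= -> -> ->]; rewrite invr1.
- move=> j; case: (nz j) => _ b0 c0.
  exact: (scaled_equiv_ginv fK finvK gK b0 c0 (equiv j)).
- by split=> //; apply: inj_comp invr_inj _.
Qed.

End PropmInverse.

Theorem lemma5p13 (L : finFieldType) (q h m : nat)
    (hq : (1 < q)%N) (hh : (0 < h)%N) (hL : #|L| = (q ^ h)%N)
    (f finv g ginv : L -> L)
    (flin : linearised q h f) (glin : linearised q h g)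
    (fK : cancel f finv) (finvK : cancel finv f)
    (gK : cancel g ginv) (ginvK : cancel ginv g)
    (hm : (1 <= m)%N) :
  Prop_m m f finv g ginv ->
  Prop_m m finv f (finv \o g) (ginv \o f) /\
  Prop_m m ginv g (ginv \o f) (finv \o g).
Proof.
by move=> fg; split; [exact: Prop_m_finv | exact: Prop_m_ginv].
Qed.
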